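(* The winding number is the unique invariant of a bounded open interval of $\widetilde{\mathbb{RP}}^1=\mathbb R$ under the action of $\widetilde{SL}(2,\mathbb R)$: for bounded open intervals $U,U'\subset\mathbb R$, there exists $\tilde A\in\widetilde{SL}(2,\mathbb R)$ with $\tilde A(U)=U'$ if and only if $W(U)=W(U')$.
   Context: Let $\pi:\mathbb R\to\mathbb{RP}^1$, $\pi(t)=[\cos t:\sin t]$, and $\bar\pi(t)=(\cos t,\sin t)\in S^1$. $SL(2,\mathbb R)$ acts on $S^1$ by $A\cdot v=Av/\|Av\|$. The universal cover $\widetilde{SL}(2,\mathbb R)$ is realized as the group of diffeomorphisms $\tilde A$ of $\mathbb R$ for which there exists $A\in SL(2,\mathbb R)$ with $\bar\pi\circ\tilde A=A\cdot\bar\pi$ (lifts of homographies of $\mathbb{RP}^1$). Winding number: for real numbers $a<b$, $W((a,b))=k$ if $b=a+k\pi$ with $k\in\mathbb N$, and $W((a,b))=k+\frac12$ if $a+k\pi<b<a+(k+1)\pi$ with $k\in\mathbb N=\{0,1,2,\dots\}$. *)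

From Stdlib Require Import Reals.
From Coquelicot Require Import Coquelicot.
Open Scope R_scope.

Definition smooth (f : R -> R) : Prop := forall (n : nat) (x : R), ex_derive_n f n x.

Definition diffeo (f : R -> R) : Prop :=
  exists g : R -> R, (forall x, g (f x) = x) /\ (forall y, f (g y) = y)
    /\ smooth f /\ smooth g.

Definition pibar (t : R) : R * R := (cos t, sin t).

Definition SL2_act (a b c d : R) (v : R * R) : R * R :=
  let u := a * fst v + b * snd v in
  let w := c * fst v + d * snd v in
  let n := sqrt (u * u + w * w) in (u / n, w / n).

(* Elements of the universal cover ~SL(2,R), realized as diffeomorphisms of R
   lifting the action of some A in SL(2,R). *)
Definition in_SL2tilde (f : R -> R) : Prop :=
  diffeo f /\
  exists a b c d : R, a * d - b * c = 1 /\
    forall t : R, pibar (f t) = SL2_act a b c d (pibar t).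

Definition W (a b : R) : R :=
  let x := (b - a) / PI in
  if Req_EM_T x (IZR (Int_part x)) then x else IZR (Int_part x) + / 2.

Definition oint (a b : R) (x : R) : Prop := a < x < b.

From Stdlib Require Import Reals Lra Lia Psatz ZArith.
From Coquelicot Require Import Coquelicot.
Open Scope R_scope.

(* An element f of ~SL(2,R) is a homeomorphism of R, hence strictly monotone, and since it
   lifts a projective map, f x - f y lies in PI Z exactly when x - y does.  If f is
   increasing (otherwise replace it by - f) it therefore commutes with the translation by
   PI, so it preserves the position of the length of an interval relative to PI Z, which is
   all W records.  Conversely, after centring both intervals at 0 one has to map
   (-L/2, L/2) onto (-L'/2, L'/2); when W agrees, the lift of diag (sqrt mu, 1 / sqrt mu)
   does so for the mu > 0 with tan (L/2) = mu tan (L'/2). *)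

(* Unlike [ex_derive_n], which is phrased through [Derive], this carries the derivatives
   as witnesses and is therefore closed under algebraic operations by a direct induction. *)
Fixpoint derivable_n (n : nat) (f : R -> R) : Prop :=
  match n with
  | O => True
  | S n => exists f', (forall x, is_derive f x (f' x)) /\ derivable_n n f'
  end.

Lemma derivable_n_S n f : derivable_n (S n) f -> derivable_n n f.
Proof.
  revert f; induction n as [|n IH]; simpl; auto.
  intros f [f' [Hf' Hn]]; exists f'; split; auto.
Qed.

Lemma Derive_n_S_is_derive f f' : (forall x, is_derive f x (f' x)) ->
  forall k x, Derive_n f (S k) x = Derive_n f' k x.
Proof.
  intros Hf' k; induction k as [|k IH]; intros x; simpl.
  - apply is_derive_unique; auto.
  - apply Derive_ext; intros t; apply IH.
Qed.

Lemma derivable_n_ex_derive_n n f : derivable_n n f -> forall x, ex_derive_n f n x.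
Proof.
  revert f; induction n as [|[|n] IH]; intros f Hf x; simpl; auto.
  - destruct Hf as [f' [Hf' _]]; exists (f' x); auto.
  - destruct Hf as [f' [Hf' Hn]].
    apply ex_derive_ext with (Derive_n f' n).
    + intros t; symmetry; apply (Derive_n_S_is_derive f f' Hf').
    + apply (IH f' Hn x).
Qed.

Lemma smooth_derivable_n f : smooth f <-> forall n, derivable_n n f.
Proof.
  split; [|intros Hf n; apply derivable_n_ex_derive_n, Hf].
  intros Hf n; revert f Hf; induction n as [|n IH]; intros f Hf; simpl; auto.
  exists (Derive f); split.
  - intros x; apply Derive_correct, (Hf 1%nat x).
  - apply IH; intros [|k] x; simpl; auto.
    apply ex_derive_ext with (Derive_n f (S k)); [intros t|apply (Hf (S (S k)) x)].
    change (Derive_n f (S k) t = Derive_n (Derive_n f 1) k t).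
    rewrite Derive_n_comp, Nat.add_1_r; reflexivity.
Qed.

Lemma derivable_n_const n c : derivable_n n (fun _ => c).
Proof.
  revert c; induction n; simpl; auto; intros c.
  exists (fun _ => 0); split; auto.
  intros x; apply (is_derive_const (K := R_AbsRing) (V := R_NormedModule)).
Qed.

Lemma derivable_n_id n : derivable_n n (fun x => x).
Proof.
  destruct n; simpl; auto.
  exists (fun _ => 1); split; [|apply derivable_n_const].
  intros x; apply (is_derive_id (K := R_AbsRing)).
Qed.

Lemma derivable_n_plus n f g :
  derivable_n n f -> derivable_n n g -> derivable_n n (fun x => f x + g x).
Proof.
  revert f g; induction n as [|n IH]; simpl; auto.
  intros f g [f' [Hf' Hf]] [g' [Hg' Hg]].
  exists (fun x => f' x + g' x); split; auto.
  intros x; apply (is_derive_plus f g); auto.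
Qed.

Lemma derivable_n_mult n f g :
  derivable_n n f -> derivable_n n g -> derivable_n n (fun x => f x * g x).
Proof.
  revert f g; induction n as [|n IH]; auto.
  intros f g Hf Hg.
  pose proof (derivable_n_S _ _ Hf) as Hfn; pose proof (derivable_n_S _ _ Hg) as Hgn.
  destruct Hf as [f' [Hf' Hf]], Hg as [g' [Hg' Hg]].
  exists (fun x => f' x * g x + f x * g' x); split.
  - intros x; apply (is_derive_mult f g); auto; intros; apply Rmult_comm.
  - apply derivable_n_plus; apply IH; auto.
Qed.

Lemma derivable_n_comp n f g :
  derivable_n n f -> derivable_n n g -> derivable_n n (fun x => f (g x)).
Proof.
  revert f g; induction n as [|n IH]; auto.
  intros f g Hf Hg.
  pose proof (derivable_n_S _ _ Hg) as Hgn.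
  destruct Hf as [f' [Hf' Hf]], Hg as [g' [Hg' Hg]].
  exists (fun x => g' x * f' (g x)); split.
  - intros x; apply (is_derive_comp f g); auto.
  - apply derivable_n_mult; auto.
Qed.

Lemma derivable_n_inv n g : (forall x, g x <> 0) ->
  derivable_n n g -> derivable_n n (fun x => / g x).
Proof.
  intros Hg0; revert g Hg0; induction n as [|n IH]; auto.
  intros g Hg0 Hg.
  pose proof (derivable_n_S _ _ Hg) as Hgn.
  destruct Hg as [g' [Hg' Hg]].
  exists (fun x => (-1) * g' x * (/ g x * / g x)); split.
  - intros x.
    replace ((-1) * g' x * (/ g x * / g x)) with (- g' x / g x ^ 2) by (field; auto).
    apply is_derive_inv; auto.
  - repeat apply derivable_n_mult; auto using derivable_n_const.
Qed.

Lemma derivable_n_sin_cos n : derivable_n n sin /\ derivable_n n cos.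
Proof.
  induction n as [|n [IHsin IHcos]]; simpl; auto.
  split.
  - exists cos; split; auto; intros x; apply is_derive_sin.
  - exists (fun x => (-1) * sin x); split.
    + intros x; replace ((-1) * sin x) with (- sin x) by ring; apply is_derive_cos.
    + apply derivable_n_mult; auto using derivable_n_const.
Qed.

Lemma derivable_n_atan n : derivable_n n atan.
Proof.
  destruct n as [|n]; simpl; auto.
  exists (fun x => / (1 + x * x)); split.
  - intros x; apply is_derive_atan.
  - apply derivable_n_inv; [intros x; nra|].
    apply derivable_n_plus, derivable_n_mult; auto using derivable_n_const, derivable_n_id.
Qed.

Lemma smooth_comp f g : smooth f -> smooth g -> smooth (fun x => f (g x)).
Proof.
  rewrite !smooth_derivable_n; intros Hf Hg n; apply derivable_n_comp; auto.
Qed.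

Lemma smooth_shift c : smooth (fun x => x + c).
Proof.
  apply smooth_derivable_n; intros n.
  apply derivable_n_plus; auto using derivable_n_id, derivable_n_const.
Qed.

Lemma sin2_cos2_mul t : sin t * sin t + cos t * cos t = 1.
Proof. pose proof (sin2_cos2 t); unfold Rsqr in *; lra. Qed.

Lemma sin_eq_0_small z : sin z = 0 -> - PI < z < PI -> z = 0.
Proof.
  intros Hz Hb; destruct (sin_eq_0_0 z Hz) as [k ->].
  pose proof PI_RGT_0.
  assert (Hk : -1 < IZR k < 1) by (split; apply (Rmult_lt_reg_r PI); lra).
  destruct Hk as [Hk1 Hk2]; apply lt_IZR in Hk1, Hk2.
  replace k with 0%Z by lia; ring.
Qed.

(* The argument of (mu cos t, sin t) chosen within PI/2 of t: a lift of the projective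
   action of diag (sqrt mu, 1 / sqrt mu). *)
Definition stretch (mu t : R) : R :=
  t + atan ((1 - mu) * sin t * cos t / (mu * cos t * cos t + sin t * sin t)).

Lemma stretch_den_pos mu t : 0 < mu -> 0 < mu * cos t * cos t + sin t * sin t.
Proof.
  intros Hmu; pose proof (sin2_cos2 t); unfold Rsqr in *.
  destruct (Rle_lt_dec mu 1); nra.
Qed.

Lemma smooth_stretch mu : 0 < mu -> smooth (stretch mu).
Proof.
  intros Hmu; apply smooth_derivable_n; intros n; unfold stretch, Rdiv.
  destruct (derivable_n_sin_cos n) as [Hsin Hcos].
  apply derivable_n_plus; [apply derivable_n_id|].
  apply derivable_n_comp; [apply derivable_n_atan|].
  apply derivable_n_mult.
  - repeat apply derivable_n_mult; auto using derivable_n_const.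
  - apply derivable_n_inv; [intros t; pose proof (stretch_den_pos mu t Hmu); lra|].
    apply derivable_n_plus; repeat apply derivable_n_mult; auto using derivable_n_const.
Qed.

Lemma stretch_polar mu t : 0 < mu -> exists r, 0 < r /\
  cos (stretch mu t) = r * (mu * cos t) /\ sin (stretch mu t) = r * sin t.
Proof.
  intros Hmu.
  set (N := (1 - mu) * sin t * cos t); set (D := mu * cos t * cos t + sin t * sin t).
  assert (HD : 0 < D) by apply (stretch_den_pos mu t Hmu).
  assert (HN1 : cos t * D - sin t * N = mu * cos t).
  { unfold D, N; transitivity (mu * cos t * (sin t * sin t + cos t * cos t)); [ring|].
    rewrite sin2_cos2_mul; ring. }
  assert (HN2 : sin t * D + cos t * N = sin t).
  { unfold D, N; transitivity (sin t * (sin t * sin t + cos t * cos t)); [ring|].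
    rewrite sin2_cos2_mul; ring. }
  set (Q := N / D).
  assert (HQ : 0 < sqrt (1 + Q²)) by (apply sqrt_lt_R0; unfold Rsqr; nra).
  exists (/ (D * sqrt (1 + Q²))); split; [apply Rinv_0_lt_compat; nra|].
  unfold stretch; fold N D Q.
  rewrite cos_plus, sin_plus, cos_atan, sin_atan.
  replace N with (Q * D) in HN1, HN2 by (unfold Q; field; lra).
  clearbody N D Q; split.
  - rewrite <- HN1; field; lra.
  - rewrite <- HN2 at 2; field; lra.
Qed.

Lemma stretch_near mu t : - (PI / 2) < stretch mu t - t < PI / 2.
Proof.
  unfold stretch.
  pose proof (atan_bound ((1 - mu) * sin t * cos t / (mu * cos t * cos t + sin t * sin t))).
  lra.
Qed.

Lemma stretch_opp mu t : stretch mu (- t) = - stretch mu t.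
Proof.
  unfold stretch; rewrite sin_neg, cos_neg, Ropp_plus_distr, <- atan_opp.
  do 3 f_equal; rewrite Rmult_opp_opp; unfold Rdiv; ring.
Qed.

Lemma stretch_1 t : stretch 1 t = t.
Proof.
  unfold stretch; rewrite Rminus_diag, !Rmult_0_l; unfold Rdiv.
  rewrite Rmult_0_l, atan_0; ring.
Qed.

Lemma stretch_inv mu nu t : 0 < mu -> 0 < nu -> mu * nu = 1 ->
  stretch nu (stretch mu t) = t.
Proof.
  intros Hmu Hnu Hmunu.
  destruct (stretch_polar mu t Hmu) as [r [Hr [Hc Hs]]].
  destruct (stretch_polar nu (stretch mu t) Hnu) as [r' [Hr' [Hc' Hs']]].
  apply Rminus_diag_uniq, sin_eq_0_small.
  - rewrite sin_minus, Hc', Hs', Hc, Hs.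
    transitivity (r' * r * sin t * cos t * (1 - mu * nu)); [ring|rewrite Hmunu; ring].
  - pose proof (stretch_near mu t); pose proof (stretch_near nu (stretch mu t)); lra.
Qed.

Lemma stretch_hit s s' : cos s <> 0 -> sin s' <> 0 ->
  0 < sin s * cos s' / (cos s * sin s') -> - (PI / 2) < s - s' < PI / 2 ->
  stretch (sin s * cos s' / (cos s * sin s')) s = s'.
Proof.
  intros Hc Hs Hmu Hss'; set (mu := sin s * cos s' / (cos s * sin s')) in *.
  destruct (stretch_polar mu s Hmu) as [r [Hr [Hcr Hsr]]].
  apply Rminus_diag_uniq, sin_eq_0_small.
  - rewrite sin_minus, Hcr, Hsr; unfold mu; field; auto.
  - pose proof (stretch_near mu s); lra.
Qed.

Lemma SL2_act_polar a b c d x t : a * d - b * c <> 0 ->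
  pibar x = SL2_act a b c d (pibar t) <->
  exists rho, 0 < rho /\ cos x = rho * (a * cos t + b * sin t)
                       /\ sin x = rho * (c * cos t + d * sin t).
Proof.
  intros Hdet; unfold SL2_act, pibar; simpl.
  set (u := a * cos t + b * sin t); set (w := c * cos t + d * sin t).
  assert (Huw : 0 < u * u + w * w).
  { assert (Hc : cos t * (a * d - b * c) = d * u - b * w) by (unfold u, w; ring).
    assert (Hs : sin t * (a * d - b * c) = a * w - c * u) by (unfold u, w; ring).
    pose proof (sin2_cos2_mul t).
    destruct (Req_dec u 0) as [Hu|Hu]; [destruct (Req_dec w 0) as [Hw|Hw]|]; try nra.
    rewrite Hu, Hw, !Rmult_0_r, Rminus_0_r in Hc, Hs.
    apply Rmult_integral in Hc, Hs; destruct Hc, Hs; nra. }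
  pose proof (sqrt_lt_R0 _ Huw) as Hn.
  split.
  - intros E; injection E as Ec Es.
    exists (/ sqrt (u * u + w * w)); split; [apply Rinv_0_lt_compat; auto|].
    rewrite Ec, Es; split; field; lra.
  - intros [rho [Hrho [Ec Es]]].
    assert (Hnorm : sqrt (u * u + w * w) = / rho).
    { pose proof (sin2_cos2_mul x) as Hx; rewrite Ec, Es in Hx.
      rewrite <- (sqrt_square (/ rho)); [|left; apply Rinv_0_lt_compat; auto].
      f_equal; apply (Rmult_eq_reg_l (rho * rho)); [|nra].
      transitivity 1; [nra|field; lra]. }
    rewrite Hnorm, Ec, Es; f_equal; field; lra.
Qed.

Definition lifts_SL2 (f : R -> R) : Prop :=
  exists a b c d : R, a * d - b * c = 1 /\
    forall t : R, pibar (f t) = SL2_act a b c d (pibar t).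

Lemma lifts_SL2_polar f : lifts_SL2 f -> exists a b c d, a * d - b * c = 1 /\
  forall t, exists rho, 0 < rho /\ cos (f t) = rho * (a * cos t + b * sin t)
                                /\ sin (f t) = rho * (c * cos t + d * sin t).
Proof.
  intros [a [b [c [d [Hdet Hf]]]]]; exists a, b, c, d; split; auto.
  intros t; apply SL2_act_polar; [lra|auto].
Qed.

Lemma lifts_SL2_comp f g : lifts_SL2 f -> lifts_SL2 g -> lifts_SL2 (fun t => f (g t)).
Proof.
  intros Hf Hg.
  destruct (lifts_SL2_polar f Hf) as [a [b [c [d [Hdet Hfp]]]]].
  destruct (lifts_SL2_polar g Hg) as [a' [b' [c' [d' [Hdet' Hgp]]]]].
  exists (a * a' + b * c'), (a * b' + b * d'), (c * a' + d * c'), (c * b' + d * d').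
  assert (Hdet'' : (a * a' + b * c') * (c * b' + d * d') - (a * b' + b * d') * (c * a' + d * c')
                   = (a * d - b * c) * (a' * d' - b' * c')) by ring.
  rewrite Hdet, Hdet', Rmult_1_l in Hdet''; split; auto.
  intros t; apply SL2_act_polar; [lra|].
  destruct (Hgp t) as [rho' [Hrho' [Hc' Hs']]].
  destruct (Hfp (g t)) as [rho [Hrho [Hc Hs]]].
  exists (rho * rho'); split; [nra|].
  rewrite Hc, Hs, Hc', Hs'; split; ring.
Qed.

Lemma diffeo_comp f g : diffeo f -> diffeo g -> diffeo (fun t => f (g t)).
Proof.
  intros [f' [Hff' [Hf'f [Hf Hf']]]] [g' [Hgg' [Hg'g [Hg Hg']]]].
  exists (fun t => g' (f' t)); repeat split; try apply smooth_comp; auto.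
  - intros x; rewrite Hff'; auto.
  - intros y; rewrite Hg'g; auto.
Qed.

Lemma in_SL2tilde_comp f g :
  in_SL2tilde f -> in_SL2tilde g -> in_SL2tilde (fun t => f (g t)).
Proof.
  intros [Hf Hfl] [Hg Hgl]; split; [apply diffeo_comp|apply lifts_SL2_comp]; auto.
Qed.

Lemma in_SL2tilde_shift c : in_SL2tilde (fun t => t + c).
Proof.
  split.
  - exists (fun t => t + - c); repeat split; try apply smooth_shift; intros; ring.
  - exists (cos c), (- sin c), (sin c), (cos c); split.
    + pose proof (sin2_cos2_mul c); lra.
    + intros t; apply SL2_act_polar; [pose proof (sin2_cos2_mul c); lra|].
      exists 1; rewrite cos_plus, sin_plus; repeat split; [lra|ring|ring].
Qed.

Lemma in_SL2tilde_stretch mu : 0 < mu -> in_SL2tilde (stretch mu).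
Proof.
  intros Hmu; assert (Hmu' : 0 < / mu) by (apply Rinv_0_lt_compat; auto).
  split.
  - exists (stretch (/ mu)); repeat split; try apply smooth_stretch; auto;
      intros; apply stretch_inv; auto; field; lra.
  - set (q := sqrt mu).
    assert (Hq : 0 < q) by (apply sqrt_lt_R0; auto).
    assert (Hqq : q * q = mu) by (apply sqrt_sqrt; lra).
    exists q, 0, 0, (/ q); split; [field; lra|].
    intros t; apply SL2_act_polar; [replace (q * / q - 0 * 0) with 1 by (field; lra); lra|].
    destruct (stretch_polar mu t Hmu) as [r [Hr [Hc Hs]]].
    exists (r * q); split; [nra|].
    rewrite Hc, Hs, <- Hqq; split; field; lra.
Qed.

Lemma smooth_continuity f : smooth f -> continuity f.
Proof.
  intros Hf x; apply continuity_pt_filterlim.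
  apply (ex_derive_continuous (K := R_AbsRing) (V := R_NormedModule)), (Hf 1%nat x).
Qed.

Lemma diffeo_inj f : diffeo f -> forall x y, f x = f y -> x = y.
Proof. intros [g [Hgf _]] x y E; rewrite <- (Hgf x), <- (Hgf y), E; auto. Qed.

Lemma in_SL2tilde_continuity f : in_SL2tilde f -> continuity f.
Proof. intros [[g [_ [_ [Hf _]]]] _]; apply smooth_continuity; auto. Qed.

Lemma continuity_affine_comp f p q : continuity f -> continuity (fun s => f (p + s * q)).
Proof.
  intros Hf s; apply continuity_pt_filterlim.
  apply (continuous_comp (fun s => p + s * q) f).
  - apply (ex_derive_continuous (K := R_AbsRing) (V := R_NormedModule)); auto_derive; auto.
  - apply continuity_pt_filterlim, Hf.
Qed.

(* Move (x0, y0) linearly to (x, y) through pairs whose first point stays below the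
   second: f never takes equal values on such a pair, so by the IVT the sign of the
   difference of the values cannot change. *)
Lemma continuous_inj_lt_transfer f : continuity f -> (forall x y, f x = f y -> x = y) ->
  forall x0 y0 x y, x0 < y0 -> x < y -> f x0 < f y0 -> f x < f y.
Proof.
  intros Hf Hinj x0 y0 x y Hxy0 Hxy Hf0.
  destruct (Rlt_le_dec (f x) (f y)) as [|Hle]; auto; exfalso.
  set (D := fun s => f (y0 + s * (y - y0)) - f (x0 + s * (x - x0))).
  assert (HD : continuity D).
  { apply continuity_minus; apply continuity_affine_comp; auto. }
  destruct (IVT_cor D 0 1 HD) as [s [Hs HDs]]; [lra| |].
  - unfold D; rewrite !Rmult_0_l, !Rmult_1_l, !Rplus_0_r.
    replace (y0 + (y - y0)) with y by ring; replace (x0 + (x - x0)) with x by ring.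
    nra.
  - assert (Hpts : y0 + s * (y - y0) = x0 + s * (x - x0)) by (apply Hinj; unfold D in HDs; lra).
    assert (Hpos : 0 < (1 - s) * (y0 - x0) + s * (y - x)).
    { destruct (Req_dec s 1) as [->|Hs1]; [lra|].
      assert (0 < (1 - s) * (y0 - x0)) by (apply Rmult_lt_0_compat; lra).
      assert (0 <= s * (y - x)) by (apply Rmult_le_pos; lra).
      lra. }
    lra.
Qed.

Lemma continuous_inj_monotone f : continuity f -> (forall x y, f x = f y -> x = y) ->
  (forall x y, x < y -> f x < f y) \/ (forall x y, x < y -> f y < f x).
Proof.
  intros Hf Hinj.
  destruct (Rlt_le_dec (f 0) (f 1)) as [H01|H10].
  - left; intros x y Hxy; apply (continuous_inj_lt_transfer f Hf Hinj 0 1); auto; lra.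
  - right; intros x y Hxy.
    assert (f 1 <> f 0) by (intros E; apply Hinj in E; lra).
    enough (- f x < - f y) by lra.
    apply (continuous_inj_lt_transfer (fun t => - f t)) with 0 1; try lra.
    + apply continuity_opp; auto.
    + intros u v E; apply Hinj; lra.
Qed.

Lemma image_oint_incr f a b : continuity f -> (forall x y, x < y -> f x < f y) -> a < b ->
  forall y, (exists x, oint a b x /\ f x = y) <-> oint (f a) (f b) y.
Proof.
  intros Hf Hincr Hab y; unfold oint; split.
  - intros [x [Hx <-]]; split; apply Hincr; lra.
  - intros Hy.
    assert (Hfab : f a < f b) by auto.
    destruct (IVT_gen f a b y Hf) as [x [Hx Hfx]].
    { rewrite Rmin_left, Rmax_right; lra. }
    rewrite Rmin_left, Rmax_right in Hx by lra.
    exists x; split; auto.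
    split; apply Rnot_le_lt; intros Hle;
      [assert (x = a) by lra | assert (x = b) by lra]; subst x; lra.
Qed.

Lemma image_oint_decr f a b : continuity f -> (forall x y, x < y -> f y < f x) -> a < b ->
  forall y, (exists x, oint a b x /\ f x = y) <-> oint (f b) (f a) y.
Proof.
  intros Hf Hdecr Hab y.
  assert (Hincr : forall u v, u < v -> - f u < - f v)
    by (intros u v Huv; pose proof (Hdecr u v Huv); lra).
  pose proof (image_oint_incr (fun t => - f t) a b (continuity_opp f Hf) Hincr Hab (- y))
    as Himg.
  unfold oint in *; split.
  - intros [x [Hx <-]]; enough (- f a < - f x < - f b) by lra.
    apply Himg; exists x; auto.
  - intros Hy; destruct (proj2 Himg) as [x [Hx Hfx]]; [lra|exists x; split; auto; lra].
Qed.

Lemma oint_subset_le a b a' b' : a' < b' ->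
  (forall y, oint a' b' y -> oint a b y) -> a <= a' /\ b' <= b.
Proof.
  intros Hab' Hsub; unfold oint in *; split; apply Rnot_lt_le; intros Hlt.
  - destruct (Hsub ((a' + Rmin a b') / 2)).
    + pose proof (Rmin_l a b'); pose proof (Rmin_r a b'); pose proof (Rmin_glb_lt a b' a'); lra.
    + pose proof (Rmin_l a b'); lra.
  - destruct (Hsub ((Rmax b a' + b') / 2)).
    + pose proof (Rmax_l b a'); pose proof (Rmax_r b a'); pose proof (Rmax_lub_lt b a' b'); lra.
    + pose proof (Rmax_l b a'); lra.
Qed.

Lemma oint_inj a b a' b' : a < b -> a' < b' ->
  (forall y, oint a b y <-> oint a' b' y) -> a = a' /\ b = b'.
Proof.
  intros Hab Hab' Heq.
  destruct (oint_subset_le a b a' b') as [H1 H2]; [auto|intros y; apply Heq|].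
  destruct (oint_subset_le a' b' a b) as [H3 H4]; [auto|intros y; apply Heq|].
  lra.
Qed.

Definition preserves_mod_PI (f : R -> R) : Prop :=
  forall x y, sin (f x - f y) = 0 <-> sin (x - y) = 0.

Lemma lifts_SL2_preserves_mod_PI f : lifts_SL2 f -> preserves_mod_PI f.
Proof.
  intros Hf; destruct (lifts_SL2_polar f Hf) as [a [b [c [d [Hdet Hfp]]]]].
  intros x y.
  destruct (Hfp x) as [rx [Hrx [Hcx Hsx]]], (Hfp y) as [ry [Hry [Hcy Hsy]]].
  assert (E : sin (f x - f y) = rx * ry * sin (x - y)).
  { rewrite !sin_minus, Hcx, Hsx, Hcy, Hsy.
    transitivity (rx * ry * (a * d - b * c) * (sin x * cos y - cos x * sin y)); [ring|].
    rewrite Hdet; ring. }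
  rewrite E; split; intros Hz; [|rewrite Hz; ring].
  apply Rmult_integral in Hz; destruct Hz; nra.
Qed.

Lemma preserves_mod_PI_opp f : preserves_mod_PI f -> preserves_mod_PI (fun t => - f t).
Proof.
  intros Hf x y; rewrite <- (Hf x y).
  replace (- f x - - f y) with (- (f x - f y)) by ring; rewrite sin_neg; lra.
Qed.

Section IncreasingModPI.

Variable f : R -> R.
Hypothesis f_cont : continuity f.
Hypothesis f_incr : forall x y, x < y -> f x < f y.
Hypothesis f_mod_PI : preserves_mod_PI f.

(* f (x + PI) - f x is a positive multiple of PI; if it exceeded PI, the IVT would give
   z in (x, x + PI) with f z = f x + PI, although z - x is not a multiple of PI. *)
Lemma incr_mod_PI_shift x : f (x + PI) = f x + PI.
Proof.
  pose proof PI_RGT_0.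
  destruct (sin_eq_0_0 (f (x + PI) - f x)) as [k Hk].
  { apply f_mod_PI; replace (x + PI - x) with PI by ring; apply sin_PI. }
  assert (Hk0 : (0 < k)%Z).
  { apply lt_IZR, (Rmult_lt_reg_r PI); [lra|]; rewrite <- Hk, Rmult_0_l.
    pose proof (f_incr x (x + PI)); lra. }
  destruct (Z.eq_dec k 1) as [->|Hk1]; [lra|exfalso].
  assert (H2PI : 2 * PI <= f (x + PI) - f x).
  { rewrite Hk; apply Rmult_le_compat_r; [lra|apply IZR_le; lia]. }
  destruct (IVT_gen f x (x + PI) (f x + PI) f_cont) as [z [Hz Hfz]].
  { rewrite Rmin_left, Rmax_right; pose proof (f_incr x (x + PI)); lra. }
  rewrite Rmin_left, Rmax_right in Hz by lra.
  assert (Hzx : sin (z - x) = 0).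
  { apply f_mod_PI; rewrite Hfz; replace (f x + PI - f x) with PI by ring; apply sin_PI. }
  assert (z <> x) by (intros ->; lra).
  assert (z <> x + PI) by (intros ->; lra).
  assert (0 < sin (z - x)) by (apply sin_gt_0; lra).
  lra.
Qed.

Lemma incr_mod_PI_shift_n n x : f (x + INR n * PI) = f x + INR n * PI.
Proof.
  revert x; induction n as [|n IH]; intros x.
  - simpl; rewrite Rmult_0_l, !Rplus_0_r; auto.
  - rewrite S_INR, Rmult_plus_distr_r, Rmult_1_l, <- Rplus_assoc, incr_mod_PI_shift, IH.
    ring.
Qed.

End IncreasingModPI.

Lemma W_translate a b : W a b = W 0 (b - a).
Proof. unfold W; rewrite Rminus_0_r; reflexivity. Qed.

Lemma PI_floor_band L : 0 <= L -> exists n, INR n * PI <= L < INR (S n) * PI.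
Proof.
  intros HL; pose proof PI_RGT_0.
  destruct (base_Int_part (L / PI)) as [H1 H2].
  assert (Hk : (0 <= Int_part (L / PI))%Z).
  { assert (0 <= L / PI) by (apply Rmult_le_pos; [|left; apply Rinv_0_lt_compat]; lra).
    enough (-1 < Int_part (L / PI))%Z by lia.
    apply lt_IZR; lra. }
  exists (Z.to_nat (Int_part (L / PI))).
  rewrite S_INR, INR_IZR_INZ, Z2Nat.id by auto.
  replace L with (L / PI * PI) at 2 3 by (field; lra).
  split; [apply Rmult_le_compat_r|apply Rmult_lt_compat_r]; lra.
Qed.

Lemma Int_part_band n L : INR n * PI <= L < INR (S n) * PI -> Int_part (L / PI) = Z.of_nat n.
Proof.
  intros [H1 H2]; pose proof PI_RGT_0.
  symmetry; apply Int_part_spec; rewrite <- INR_IZR_INZ; rewrite S_INR in H2.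
  replace L with (L / PI * PI) in H1, H2 by (field; lra).
  split; [enough (L / PI < INR n + 1) by lra; apply (Rmult_lt_reg_r PI)
        |apply (Rmult_le_reg_r PI)]; lra.
Qed.

Lemma W_mult_PI n : W 0 (INR n * PI) = INR n.
Proof.
  pose proof PI_RGT_0.
  unfold W; rewrite Rminus_0_r.
  replace (INR n * PI / PI) with (INR n) by (field; lra).
  rewrite Int_part_INR, <- INR_IZR_INZ.
  destruct (Req_EM_T (INR n) (INR n)); tauto.
Qed.

Lemma W_band n L : INR n * PI < L < INR (S n) * PI -> W 0 L = INR n + / 2.
Proof.
  intros HL; pose proof PI_RGT_0.
  unfold W; rewrite Rminus_0_r, (Int_part_band n L), <- INR_IZR_INZ by lra.
  destruct (Req_EM_T (L / PI) (INR n)) as [E|]; auto.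
  replace L with (L / PI * PI) in HL by (field; lra); rewrite E in HL; lra.
Qed.

Definition same_PI_band (L L' : R) : Prop :=
  exists n, INR n * PI < L < INR (S n) * PI /\ INR n * PI < L' < INR (S n) * PI.

Lemma W_eq_iff L L' : 0 < L -> 0 < L' ->
  W 0 L = W 0 L' <-> L = L' \/ same_PI_band L L'.
Proof.
  intros HL HL'; split.
  - destruct (PI_floor_band L) as [n [Hn1 Hn2]]; [lra|].
    destruct (PI_floor_band L') as [n' [Hn1' Hn2']]; [lra|].
    destruct Hn1 as [Hn1|<-], Hn1' as [Hn1'|<-].
    + rewrite (W_band n), (W_band n') by lra.
      intros E.
      replace n' with n in * by (apply INR_eq; lra); right; exists n; lra.
    + rewrite (W_band n), W_mult_PI by lra.
      intros E.
      exfalso; assert (Hpar : INR (2 * n + 1) = INR (2 * n')) by (rewrite plus_INR, !mult_INR; simpl; lra).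
      apply INR_eq in Hpar; lia.
    + rewrite (W_band n' L'), W_mult_PI by lra.
      intros E.
      exfalso; assert (Hpar : INR (2 * n' + 1) = INR (2 * n)) by (rewrite plus_INR, !mult_INR; simpl; lra).
      apply INR_eq in Hpar; lia.
    + rewrite !W_mult_PI; intros E; apply INR_eq in E; subst; auto.
  - intros [<-|[n [Hn Hn']]]; auto.
    rewrite (W_band n L), (W_band n L'); auto.
Qed.

Lemma W_incr_mod_PI f a b : continuity f -> (forall x y, x < y -> f x < f y) ->
  preserves_mod_PI f -> a < b -> W a b = W (f a) (f b).
Proof.
  intros Hf Hincr Hmod Hab; pose proof PI_RGT_0.
  rewrite (W_translate a), (W_translate (f a)).
  apply W_eq_iff; [lra|pose proof (Hincr a b Hab); lra|].
  destruct (PI_floor_band (b - a)) as [n [[Hn|Hn] Hn']]; [lra| |].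
  - right; exists n.
    pose proof (incr_mod_PI_shift_n f Hf Hincr Hmod n a) as Hfn.
    pose proof (incr_mod_PI_shift_n f Hf Hincr Hmod (S n) a) as HfSn.
    pose proof (Hincr (a + INR n * PI) b); pose proof (Hincr b (a + INR (S n) * PI)).
    lra.
  - left; replace b with (a + INR n * PI) by lra.
    rewrite (incr_mod_PI_shift_n f Hf Hincr Hmod); ring.
Qed.

Lemma W_decr_mod_PI f a b : continuity f -> (forall x y, x < y -> f y < f x) ->
  preserves_mod_PI f -> a < b -> W a b = W (f b) (f a).
Proof.
  intros Hf Hdecr Hmod Hab.
  rewrite (W_incr_mod_PI (fun t => - f t) a b), !(W_translate (- f _)), (W_translate (f b)).
  - f_equal; ring.
  - apply continuity_opp; auto.
  - intros x y Hxy; pose proof (Hdecr x y Hxy); lra.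
  - apply preserves_mod_PI_opp; auto.
  - auto.
Qed.

Lemma in_SL2tilde_image_W f a b a' b' : a < b -> a' < b' -> in_SL2tilde f ->
  (forall y, (exists x, oint a b x /\ f x = y) <-> oint a' b' y) -> W a b = W a' b'.
Proof.
  intros Hab Hab' HSL Himg.
  pose proof (in_SL2tilde_continuity f HSL) as Hf.
  destruct HSL as [Hdiff Hlift].
  pose proof (lifts_SL2_preserves_mod_PI f Hlift) as Hmod.
  destruct (continuous_inj_monotone f Hf (diffeo_inj f Hdiff)) as [Hincr|Hdecr].
  - destruct (oint_inj (f a) (f b) a' b') as [<- <-]; auto.
    { intros y; rewrite <- Himg, (image_oint_incr f a b); tauto. }
    apply W_incr_mod_PI; auto.
  - destruct (oint_inj (f b) (f a) a' b') as [<- <-]; auto.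
    { intros y; rewrite <- Himg, (image_oint_decr f a b); tauto. }
    apply W_decr_mod_PI; auto.
Qed.

Lemma sin_mul_pos_band n y y' : INR n * PI < y < INR (S n) * PI ->
  INR n * PI < y' < INR (S n) * PI -> 0 < sin y * sin y'.
Proof.
  revert y y'; induction n as [|n IH]; intros y y' Hy Hy'.
  - simpl in Hy, Hy'; rewrite Rmult_0_l, Rmult_1_l in Hy, Hy'.
    pose proof (sin_gt_0 y); pose proof (sin_gt_0 y'); nra.
  - replace (sin y * sin y') with (sin (y - PI) * sin (y' - PI))
      by (rewrite !sin_minus, cos_PI, sin_PI; ring).
    rewrite !S_INR in Hy, Hy'; apply IH; rewrite S_INR; lra.
Qed.

Lemma stretch_solution L L' : 0 < L -> 0 < L' ->
  L = L' \/ same_PI_band L L' ->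
  exists mu, 0 < mu /\ stretch mu (L / 2) = L' / 2.
Proof.
  intros HL HL' [<-|[n [Hn Hn']]]; [exists 1; split; [lra|apply stretch_1]|].
  set (s := L / 2); set (s' := L' / 2).
  pose proof (sin_mul_pos_band n L L' Hn Hn') as Hsin.
  replace L with (2 * s) in Hsin, Hn by (unfold s; field).
  replace L' with (2 * s') in Hsin, Hn' by (unfold s'; field).
  rewrite !sin_2a in Hsin.
  assert (Hc : cos s <> 0) by (intros E; rewrite E in Hsin; nra).
  assert (Hs : sin s' <> 0) by (intros E; rewrite E in Hsin; nra).
  assert (Hmu : 0 < sin s * cos s' / (cos s * sin s')).
  { replace (sin s * cos s' / (cos s * sin s'))
      with (sin s * cos s * (sin s' * cos s') / ((cos s * sin s') * (cos s * sin s')))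
      by (field; auto).
    apply Rdiv_lt_0_compat; [nra|].
    assert (cos s * sin s' <> 0) by (apply Rmult_integral_contrapositive; auto); nra. }
  exists (sin s * cos s' / (cos s * sin s')); split; auto.
  apply stretch_hit; auto; rewrite S_INR in Hn, Hn'; lra.
Qed.

Lemma W_eq_in_SL2tilde_image a b a' b' : a < b -> a' < b' -> W a b = W a' b' ->
  exists f, in_SL2tilde f /\ forall y, (exists x, oint a b x /\ f x = y) <-> oint a' b' y.
Proof.
  intros Hab Hab' HW.
  rewrite (W_translate a), (W_translate a'), W_eq_iff in HW by lra.
  destruct (stretch_solution (b - a) (b' - a')) as [mu [Hmu Hstretch]]; [lra|lra|auto|].
  set (f := fun t => stretch mu (t + - ((a + b) / 2)) + (a' + b') / 2).
  assert (Hf : in_SL2tilde f).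
  { apply (in_SL2tilde_comp (fun t => t + (a' + b') / 2)); [apply in_SL2tilde_shift|].
    apply (in_SL2tilde_comp (stretch mu)); [apply in_SL2tilde_stretch, Hmu|].
    apply in_SL2tilde_shift. }
  assert (Hfa : f a = a').
  { unfold f; replace (a + - ((a + b) / 2)) with (- ((b - a) / 2)) by field.
    rewrite stretch_opp, Hstretch; field. }
  assert (Hfb : f b = b').
  { unfold f; replace (b + - ((a + b) / 2)) with ((b - a) / 2) by field.
    rewrite Hstretch; field. }
  exists f; split; auto.
  pose proof (in_SL2tilde_continuity f Hf) as Hcont.
  destruct (continuous_inj_monotone f Hcont (diffeo_inj f (proj1 Hf))) as [Hincr|Hdecr].
  - intros y; rewrite (image_oint_incr f a b), Hfa, Hfb; auto; tauto.
  - pose proof (Hdecr a b Hab); lra.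
Qed.

Theorem mainTheorem6 :
  forall a b a' b' : R, a < b -> a' < b' ->
    ((exists f : R -> R, in_SL2tilde f /\
        (forall y, (exists x, oint a b x /\ f x = y) <-> oint a' b' y))
     <-> W a b = W a' b').
Proof.
  intros a b a' b' Hab Hab'; split.
  - intros [f [Hf Himg]]; apply (in_SL2tilde_image_W f); auto.
  - apply W_eq_in_SL2tilde_image; auto.
Qed.
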